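(* Let $\mathbf{X},\mathbf{Y}$ be Banach spaces, $\mathcal{S}\subset\mathbf{X}$, $\mathcal{S}'\subset\mathbf{Y}$. Assume $\Phi:\mathcal{S}\to\mathbf{Y}$ is Lipschitz continuous and $\Phi(\mathcal{S})\supset\mathcal{S}'$. Then $s^\ast_{\mathbf{Y}}(\mathcal{S}')\ge s^\ast_{\mathbf{X}}(\mathcal{S})$.
   Context: For a real Banach space $\mathbf{X}$ and $\mathcal{S}\subset\mathbf{X}$: a codec is a sequence $((E_R,D_R))_{R\in\mathbb{N}}$ of maps $E_R:\mathcal{S}\to\{0,1\}^R$, $D_R:\{0,1\}^R\to\mathbf{X}$; distortion $\delta_{\mathcal{S},\mathbf{X}}(E_R,D_R)=\sup_{\mathbf{x}\in\mathcal{S}}\|\mathbf{x}-D_R(E_R(\mathbf{x}))\|_{\mathbf{X}}$; optimal compression rate $s^\ast_{\mathbf{X}}(\mathcal{S})=\sup\{s\ge0:\exists\text{ codec with }\sup_RR^s\delta_{\mathcal{S},\mathbf{X}}(E_R,D_R)<\infty\}\in[0,\infty]$. *)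

From HB Require Import structures.
From mathcomp Require Import all_boot all_order all_algebra.
From mathcomp Require Import all_classical all_reals all_analysis.
Set Implicit Arguments. Unset Strict Implicit. Unset Printing Implicit Defensive.
Import Order.TTheory GRing.Theory Num.Theory.
Import numFieldNormedType.Exports.
Local Open Scope classical_set_scope.
Local Open Scope ring_scope.

Definition codec_bits (n : nat) := n.-tuple bool.

(* An codec_encoder for rate n: only its values on S matter. *)
Definition codec_encoder (X : Type) := forall n : nat, X -> codec_bits n.
Definition codec_decoder (X : Type) := forall n : nat, codec_bits n -> X.

Definition codec_distortion (R : realType) (X : normedModType R) (S : set X)
  (n : nat) (E : X -> codec_bits n) (D : codec_bits n -> X) : \bar R :=
  ereal_sup [set ((`| x - D (E x) |)%:E)%E | x in S].

Definition codec_achieves_rate (R : realType) (X : normedModType R) (S : set X)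
  (E : codec_encoder X) (D : codec_decoder X) (s : R) : Prop :=
  (ereal_sup [set ((n%:R `^ s)%:E * codec_distortion S (E n) (D n))%E
              | n in [set n : nat | (0 < n)%N]] < +oo)%E.

(* optimal compression rate s*_X(S) = sup{ s >= 0 | exists codec achieving s }
   taken in [0, +oo] (so it is 0 when no s qualifies). *)
Definition codec_opt_rate (R : realType) (X : normedModType R) (S : set X) : \bar R :=
  ereal_sup ([set 0%E] `|`
    [set (s%:E)%E | s in [set s : R | 0 <= s /\
        exists (E : codec_encoder X) (D : codec_decoder X), codec_achieves_rate S E D s]]).

Definition codec_lipschitz_on (R : realType) (X Y : normedModType R) (S : set X)
  (f : X -> Y) : Prop :=
  exists L : R, forall x y, S x -> S y -> `| f x - f y | <= L * `| x - y |.

(* Pull a codec for S back along Phi: a point y of S' is encoded by the code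
   of a chosen preimage x in S, and a code b is decoded as the image of some
   point of S carrying the code b.  Two points of S with the same code are
   both within the distortion d of the decoded point, hence 2d apart, so a
   Lipschitz Phi maps them 2Ld apart: the pulled-back codec has distortion at
   most 2Ld and therefore achieves every rate the original one achieves. *)
From HB Require Import structures.
From mathcomp Require Import all_boot all_order all_algebra.
From mathcomp Require Import all_classical all_reals all_analysis.
Set Implicit Arguments. Unset Strict Implicit. Unset Printing Implicit Defensive.
Import Order.TTheory GRing.Theory Num.Theory.
Import numFieldNormedType.Exports.
Local Open Scope classical_set_scope.
Local Open Scope ring_scope.

Lemma codec_lipschitz_on_ge0 (R : realType) (X Y : normedModType R)
  (S : set X) (f : X -> Y) :
  codec_lipschitz_on S f ->
  exists2 L : R, 0 <= L & forall x y, S x -> S y -> `|f x - f y| <= L * `|x - y|.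
Proof.
move=> [L fL]; exists (Num.max L 0); first by rewrite le_max lexx orbT.
move=> x y Sx Sy; apply: le_trans (fL x y Sx Sy) _.
by rewrite ler_wpM2r // le_max lexx.
Qed.

Lemma codec_opt_rate_le (R : realType) (X Y : normedModType R)
  (S : set X) (S' : set Y) :
  (forall s (E : codec_encoder X) (D : codec_decoder X), codec_achieves_rate S E D s ->
     exists (E' : codec_encoder Y) (D' : codec_decoder Y), codec_achieves_rate S' E' D' s) ->
  (codec_opt_rate S <= codec_opt_rate S')%E.
Proof.
move=> transfer; apply: ereal_sup_le => z [->|]; first by left.
move=> [s [s_ge0 [E [D ES]]] <-]; right; exists s => //.
by split => //; exact: transfer ES.
Qed.

Section CodecDistortion.
Variables (R : realType) (X : normedModType R) (S : set X) (n : nat).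
Variables (E : X -> codec_bits n) (D : codec_bits n -> X).

Lemma codec_distortion_ge {x} :
  S x -> ((`|x - D (E x)|)%:E <= codec_distortion S E D)%E.
Proof. by move=> Sx; apply: ereal_sup_ubound; exists x. Qed.

Lemma codec_distortion_same_code x x' : S x -> S x' -> E x = E x' ->
  ((`|x - x'|)%:E <= codec_distortion S E D *+ 2)%E.
Proof.
move=> Sx Sx' Exx'; rewrite mule2n.
have -> : x - x' = (x - D (E x)) - (x' - D (E x')) by rewrite Exx' opprB addrA subrK.
rewrite (le_trans _ (leeD (codec_distortion_ge Sx) (codec_distortion_ge Sx'))) //.
by rewrite -EFinD lee_fin ler_normB.
Qed.

End CodecDistortion.

Section PullbackCodec.
Variables (R : realType) (X Y : normedModType R).
Variables (S : set X) (S' : set Y) (Phi : X -> Y) (L : R).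
Hypothesis L_ge0 : 0 <= L.
Hypothesis Phi_lipschitz : forall x y, S x -> S y -> `|Phi x - Phi y| <= L * `|x - y|.
Hypothesis S'_sub : S' `<=` Phi @` S.

Definition pullback_preimage (y : Y) : X := xget 0 [set x | S x /\ Phi x = y].

Definition pullback_encoder (E : codec_encoder X) : codec_encoder Y :=
  fun n y => E n (pullback_preimage y).

(* A code not used on S is decoded as Phi (D n b); its value is irrelevant. *)
Definition pullback_decoder (E : codec_encoder X) (D : codec_decoder X) : codec_decoder Y :=
  fun n b => Phi (xget (D n b) [set x | S x /\ E n x = b]).
Arguments pullback_decoder : clear implicits.

Lemma pullback_preimageP {y} : S' y -> S (pullback_preimage y) /\ Phi (pullback_preimage y) = y.
Proof. by move=> /S'_sub[x Sx Phix]; exact: (@xgetI _ 0 [set x | S x /\ Phi x = y] x). Qed.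

Lemma pullback_distortion_le E D n :
  (codec_distortion S' (pullback_encoder E n) (pullback_decoder E D n)
     <= (2 * L)%:E * codec_distortion S (E n) (D n))%E.
Proof.
apply: ge_ereal_sup => _ [y S'y <-].
rewrite /pullback_encoder /pullback_decoder.
set x := pullback_preimage y; set x' := xget _ _.
have [Sx Phix] : S x /\ Phi x = y := pullback_preimageP S'y.
rewrite -[y in `|y - _|]Phix.
have [Sx' Ex'] : S x' /\ E n x' = E n x by exact: (@xgetI _ _ [set z | S z /\ E n z = E n x] x).
apply: (le_trans (y := (L * `|x - x'|)%:E)); first by rewrite lee_fin Phi_lipschitz.
rewrite EFinM (EFinM 2) -muleA muleCA mule_natl.
apply: lee_wpmul2l; first by rewrite lee_fin.
by apply: codec_distortion_same_code.
Qed.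

Lemma pullback_achieves_rate E D s : codec_achieves_rate S E D s ->
  codec_achieves_rate S' (pullback_encoder E) (pullback_decoder E D) s.
Proof.
rewrite /codec_achieves_rate; set M := ereal_sup _ => M_fin.
have L2_ge0 : (0 <= (2 * L)%:E)%E by rewrite lee_fin mulr_ge0.
apply: (le_lt_trans (y := ((2 * L)%:E * M)%E)); last exact: lte_mul_pinfty.
apply: ge_ereal_sup => _ [n n_gt0 <-].
apply: (le_trans (y := ((n%:R `^ s)%:E * ((2 * L)%:E * codec_distortion S (E n) (D n)))%E)).
  by apply: lee_wpmul2l; [rewrite lee_fin powR_ge0 | exact: pullback_distortion_le].
by rewrite muleCA; apply: lee_wpmul2l => //; apply: ereal_sup_ubound; exists n.
Qed.

End PullbackCodec.

Theorem lemmaA2 (R : realType) (X Y : completeNormedModType R)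
  (S : set X) (S' : set Y) (Phi : X -> Y) :
  codec_lipschitz_on S Phi -> S' `<=` Phi @` S ->
  (codec_opt_rate S <= codec_opt_rate S')%E.
Proof.
move=> /codec_lipschitz_on_ge0[L L_ge0 Phi_lipschitz] S'_sub.
apply: codec_opt_rate_le => s E D ES.
exists (pullback_encoder S Phi E), (pullback_decoder S Phi E D).
exact: (pullback_achieves_rate L_ge0 Phi_lipschitz S'_sub ES).
Qed.
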